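(* Let $S,U$ be standard Borel, $\gamma\in(0,1)$, and consider two series-wired modules: module 1 with input state space $S$, output $U$, and module 2 with input $U$, output $S$, each with fixed policy, expected scalar one-step reward $r_i(x,a)$ and transition kernel $P^{(i)}(\cdot\mid x,a)$, inducing micro-step Bellman transformers $T_1:\mathcal{B}(U)\to\mathcal{B}(S)$, $T_2:\mathcal{B}(S)\to\mathcal{B}(U)$, $(T_iW)(x)=\int_A[r_i(x,a)+\gamma\int W\,dP^{(i)}(\cdot\mid x,a)]\pi_i(da\mid x)$; let $\widetilde T_i$ be defined likewise from perturbed $\tilde r_i,\widetilde P^{(i)}$ with the same policies. Assume all (original and perturbed) scalar rewards are bounded by $R_{\max}$, set $V_{\max}=R_{\max}/(1-\gamma)$, and assume $\sup_{x,a}|\tilde r_i(x,a)-r_i(x,a)|\le\varepsilon_r^{(i)}$ and $\sup_{x,a}d_{\mathrm{TV}}(\widetilde P^{(i)}(\cdot\mid x,a),P^{(i)}(\cdot\mid x,a))\le\varepsilon_P^{(i)}$. Let $\epsilon_i:=\varepsilon_r^{(i)}+\gamma V_{\max}\varepsilon_P^{(i)}$, and let $V^\pi,\widetilde V^\pi$ be the unique fixed points in $\mathcal{B}(S)$ of $T_1\circ T_2$ and $\widetilde T_1\circ\widetilde T_2$. Then \[\|\widetilde V^\pi-V^\pi\|_\infty\le\frac{\epsilon_1+\gamma\epsilon_2}{1-\gamma^2}.\]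
   Context: $\mathcal{B}(X)$ denotes bounded measurable real functions on $X$ with sup norm. $d_{\mathrm{TV}}(\mu,\nu):=\sup_{\|f\|_\infty\le1}|\int f\,d\mu-\int f\,d\nu|$. *)

From HB Require Import structures.
From mathcomp Require Import all_boot all_order all_algebra.
From mathcomp Require Import all_classical all_reals all_analysis.
Set Implicit Arguments. Unset Strict Implicit. Unset Printing Implicit Defensive.
Import Order.TTheory GRing.Theory Num.Theory.
Local Open Scope classical_set_scope.
Local Open Scope ring_scope.

Definition dTV (R : realType) (d : measure_display) (X : measurableType d)
  (mu nu : {measure set X -> \bar R}) : \bar R :=
  ereal_sup [set `| (\int[mu]_x (f x)%:E - \int[nu]_x (f x)%:E)%E |%E
            | f in [set f : X -> R | measurable_fun setT f /\ forall x, `|f x| <= 1]].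

Definition sup_norm (R : realType) (X : Type) (f : X -> R) : \bar R :=
  ereal_sup (range (fun x => (`|f x|)%:E)).

Definition bellman (R : realType) (dX dA dY : measure_display)
  (X : measurableType dX) (A : measurableType dA) (Y : measurableType dY)
  (pi : R.-pker X ~> A) (r : X -> A -> R) (P : R.-pker (X * A)%type ~> Y)
  (g : R) (W : Y -> R) : X -> R :=
  fun x => Rintegral (pi x) setT
             (fun a => r x a + g * Rintegral (P (x, a)) setT W).

Definition bounded_meas (R : realType) (d : measure_display) (X : measurableType d)
  (f : X -> R) : Prop :=
  measurable_fun setT f /\ exists M : R, forall x, `|f x| <= M.

(* For bounded [W], [W~] a single micro-step moves by
     |T~ W~ - T W| <= eps_r + g (|W~| eps_P + |W~ - W|):
   the reward error, the total-variation error of the kernel tested against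
   [W~], and the propagated error.  Fixed points of [T_1 o T_2] are bounded
   by [Vmax], because [|V| <= Rmax + g Rmax + g^2 |V|] and the sup norm is
   finite.  Chaining two micro-steps, [Delta = V~ - V] satisfies
   [|Delta| <= eps_1 + g eps_2 + g^2 |Delta|], which gives the bound. *)

From mathcomp Require Import all_boot all_order all_algebra.
From mathcomp Require Import all_classical all_reals all_analysis.
From mathcomp Require Import measurable_realfun lra ring.
Import Order.TTheory GRing.Theory Num.Theory.
Local Open Scope ring_scope.

Section probability_Rintegral.
Context {d : measure_display} {Y : measurableType d} {R : realType}.
Implicit Types (mu nu : {measure set Y -> \bar R}) (f : Y -> R) (M : R).

Lemma integrable_bounded_prob {mu f M} : mu setT = 1%E ->
  measurable_fun setT f -> (forall y, `|f y| <= M) ->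
  mu.-integrable setT (EFin \o f).
Proof.
move=> mu1 mf fM; apply: measurable_bounded_integrable => //.
  by rewrite mu1 ltry.
exists M; split; first exact: num_real.
by move=> N MN y _; apply: le_trans (fM y) (ltW MN).
Qed.

Lemma normr_Rintegral_le_prob {mu f M} : mu setT = 1%E ->
  measurable_fun setT f -> (forall y, `|f y| <= M) ->
  `|Rintegral mu setT f| <= M.
Proof.
move=> mu1 mf fM; have intf := integrable_bounded_prob mu1 mf fM.
apply: le_trans (le_normr_Rintegral _ intf) _ => //.
have intM : mu.-integrable setT (EFin \o cst M).
  exact: (integrable_bounded_prob (M := `|M|) mu1 (measurable_cst _)).
rewrite -[leRHS]mulr1 -[1]/(fine 1%E) -mu1 -Rintegral_cst //.
apply: le_Rintegral => //; exact: integrable_norm.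
Qed.

Lemma EFin_Rintegral mu f : mu.-integrable setT (EFin \o f) ->
  (Rintegral mu setT f)%:E = (\int[mu]_y (f y)%:E)%E.
Proof. by move=> intf; rewrite fineK //; exact: integrable_fin_num. Qed.

Lemma Rintegral_dist_le_dTV {mu nu f} : mu setT = 1%E -> nu setT = 1%E ->
  measurable_fun setT f -> (forall y, `|f y| <= 1) ->
  (`|Rintegral mu setT f - Rintegral nu setT f|%:E <= dTV mu nu)%E.
Proof.
move=> mu1 nu1 mf f1; apply: ereal_sup_ubound; exists f => //=.
by rewrite -!EFin_Rintegral //; exact: integrable_bounded_prob f1.
Qed.

Lemma Rintegral_dist_le_mul_dTV {mu nu f M e} : mu setT = 1%E -> nu setT = 1%E ->
  measurable_fun setT f -> (forall y, `|f y| <= M) -> (dTV mu nu <= e%:E)%E ->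
  `|Rintegral mu setT f - Rintegral nu setT f| <= M * e.
Proof.
move=> mu1 nu1 mf fM dTVe.
have M_ge0 : 0 <= M.
  exact: le_trans (normr_ge0 _) (normr_Rintegral_le_prob mu1 mf fM).
have [M0|M_neq0] := eqVneq M 0.
  apply: le_trans (ler_normB _ _) _; rewrite M0 mul0r -[0]addr0.
  by apply: lerD; apply: normr_Rintegral_le_prob; rewrite -?M0.
have {M_ge0 M_neq0}M_gt0 : 0 < M by rewrite lt_def M_neq0.
pose g y := f y / M.
have mg : measurable_fun setT g by exact: measurable_funM.
have g1 y : `|g y| <= 1.
  by rewrite normrM normfV (gtr0_norm M_gt0) ler_pdivrMr // mul1r.
have intf_mu := integrable_bounded_prob mu1 mf fM.
have intf_nu := integrable_bounded_prob nu1 mf fM.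
have := le_trans (Rintegral_dist_le_dTV mu1 nu1 mg g1) dTVe.
rewrite lee_fin /g !RintegralZr // -mulrBl normrM normfV (gtr0_norm M_gt0).
by rewrite ler_pdivrMr // mulrC.
Qed.

End probability_Rintegral.

Lemma measurable_Rintegral_pker {R : realType} {dX dY : measure_display}
    {X : measurableType dX} {Y : measurableType dY}
    (k : R.-pker X ~> Y) (h : X * Y -> R) (M : R) :
  measurable_fun setT h -> (forall z, `|h z| <= M) ->
  measurable_fun setT (fun x => Rintegral (k x) setT (fun y => h (x, y))).
Proof.
move=> mh hM.
have mhx x : measurable_fun setT (fun y => h (x, y)).
  exact: measurableT_comp mh (pair1_measurable x).
have hM_ge0 z : (0 <= (h z + M)%:E)%E.
  by rewrite lee_fin -lerBlDr sub0r; have := hM z; rewrite ler_norml => /andP[].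
have mhM : measurable_fun setT (fun z => (h z + M)%:E).
  by apply/measurable_EFinP; exact: measurable_funD.
(* shifting [h] by [M] makes it nonnegative, so the kernel integral is measurable *)
have -> : (fun x => Rintegral (k x) setT (fun y => h (x, y))) =
    (fun x => fine (\int[k x]_y (h (x, y) + M)%:E)%E - M).
  apply/funext => x; rewrite -[fine _]/(Rintegral (k x) setT _).
  rewrite RintegralD // ?Rintegral_cst // ?prob_kernel ?mulr1 ?addrK //.
    exact: integrable_bounded_prob (prob_kernel x) (mhx x) (fun y => hM (x, y)).
  exact: (integrable_bounded_prob (M := `|M|) (prob_kernel x) (measurable_cst _)).
apply: measurable_funB; last exact: measurable_cst.
apply: measurableT_comp; first exact: fine_measurable.
exact: measurable_fun_integral_finite_kernel k hM_ge0 mhM.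
Qed.

Section sup_norm.
Context {R : realType} {X : Type}.
Implicit Types (f : X -> R) (b : R).

Lemma sup_norm_leP f b : (sup_norm f <= b%:E)%E <-> forall x, `|f x| <= b.
Proof.
split=> [fb x|fb].
  by rewrite -lee_fin; apply: le_trans fb; apply: ereal_sup_ubound; exists x.
by apply: ge_ereal_sup => _ [x _ <-]; rewrite lee_fin.
Qed.

Lemma sup_norm_le_of_self_improving_bound f (c q : R) : 0 <= q -> q < 1 ->
  (exists M, forall x, `|f x| <= M) ->
  (forall D, (forall x, `|f x| <= D) -> forall x, `|f x| <= c + q * D) ->
  (sup_norm f <= (c / (1 - q))%:E)%E.
Proof.
move=> q_ge0 q_lt1 [M fM] improve.
have := (sup_norm_leP f M).2 fM.
case Ef: (sup_norm f) => [D| |] // _; last exact: leNye.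
have fD : forall x, `|f x| <= D by apply/sup_norm_leP; rewrite Ef.
have := (sup_norm_leP f (c + q * D)).2 (improve D fD).
rewrite Ef !lee_fin ler_pdivlMr ?subr_gt0 // => Dle.
by rewrite mulrBr mulr1 mulrC; lra.
Qed.

End sup_norm.

Section bellman.
Context {R : realType} {dX dA dY : measure_display}.
Context {X : measurableType dX} {A : measurableType dA} {Y : measurableType dY}.
Variables (pi : R.-pker X ~> A) (g : R).
Hypothesis g_ge0 : 0 <= g.
Implicit Types (r : X -> A -> R) (P : R.-pker (X * A)%type ~> Y) (W : Y -> R) (Rm D : R).

Definition bellman_integrand r P W (xa : X * A) : R :=
  r xa.1 xa.2 + g * Rintegral (P xa) setT W.

Lemma bellmanE r P W x : bellman pi r P g W x =
  Rintegral (pi x) setT (fun a => bellman_integrand r P W (x, a)).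
Proof. by []. Qed.

Lemma measurable_bellman_integrand r P W D :
  measurable_fun setT (fun xa : X * A => r xa.1 xa.2) ->
  measurable_fun setT W -> (forall y, `|W y| <= D) ->
  measurable_fun setT (bellman_integrand r P W).
Proof.
move=> mr mW WD; apply: measurable_funD => //.
apply: measurable_funM; first exact: measurable_cst.
apply: measurable_Rintegral_pker (fun z => WD z.2).
exact: measurableT_comp mW measurable_snd.
Qed.

Lemma norm_bellman_integrand_le r P W Rm D :
  measurable_fun setT W -> (forall y, `|W y| <= D) -> (forall x a, `|r x a| <= Rm) ->
  forall xa, `|bellman_integrand r P W xa| <= Rm + g * D.
Proof.
move=> mW WD rRm [x a]; apply: le_trans (ler_normD _ _) _; apply: lerD => //.
rewrite normrM (ger0_norm g_ge0); apply: ler_wpM2l => //.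
exact: normr_Rintegral_le_prob (prob_kernel (s := P) (x, a)) mW WD.
Qed.

Lemma measurable_bellman r P W Rm D :
  measurable_fun setT (fun xa : X * A => r xa.1 xa.2) ->
  measurable_fun setT W -> (forall y, `|W y| <= D) -> (forall x a, `|r x a| <= Rm) ->
  measurable_fun setT (bellman pi r P g W).
Proof.
move=> mr mW WD rRm.
apply: (measurable_Rintegral_pker pi (bellman_integrand r P W) (Rm + g * D)).
  exact: measurable_bellman_integrand mr mW WD.
exact: norm_bellman_integrand_le mW WD rRm.
Qed.

Lemma norm_bellman_le r P W Rm D :
  measurable_fun setT (fun xa : X * A => r xa.1 xa.2) ->
  measurable_fun setT W -> (forall y, `|W y| <= D) -> (forall x a, `|r x a| <= Rm) ->
  forall x, `|bellman pi r P g W x| <= Rm + g * D.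
Proof.
move=> mr mW WD rRm x; rewrite bellmanE.
apply: normr_Rintegral_le_prob (prob_kernel (s := pi) x) _ _.
  apply: measurableT_comp (pair1_measurable x).
  exact: measurable_bellman_integrand mr mW WD.
by move=> a; exact: (norm_bellman_integrand_le r P W Rm D mW WD rRm (x, a)).
Qed.

Lemma bellman_perturbation_le (r rt : X -> A -> R) (P Pt : R.-pker (X * A)%type ~> Y)
    (W Wt : Y -> R) (Rm D er eP E : R) :
  measurable_fun setT (fun xa : X * A => r xa.1 xa.2) ->
  measurable_fun setT (fun xa : X * A => rt xa.1 xa.2) ->
  (forall x a, `|r x a| <= Rm) -> (forall x a, `|rt x a| <= Rm) ->
  measurable_fun setT W -> (forall y, `|W y| <= D) ->
  measurable_fun setT Wt -> (forall y, `|Wt y| <= D) ->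
  (forall x a, `|rt x a - r x a| <= er) ->
  (forall x a, (dTV (Pt (x, a)) (P (x, a)) <= eP%:E)%E) ->
  (forall y, `|Wt y - W y| <= E) ->
  forall x, `|bellman pi rt Pt g Wt x - bellman pi r P g W x| <= er + g * (D * eP + E).
Proof.
move=> mr mrt rRm rtRm mW WD mWt WtD rer PeP WE x.
have pi1 := prob_kernel (s := pi) x.
have mI := measurableT_comp (measurable_bellman_integrand r P W D mr mW WD)
  (pair1_measurable x).
have mIt := measurableT_comp (measurable_bellman_integrand rt Pt Wt D mrt mWt WtD)
  (pair1_measurable x).
have intI := integrable_bounded_prob pi1 mI
  (fun a => norm_bellman_integrand_le r P W Rm D mW WD rRm (x, a)).
have intIt := integrable_bounded_prob pi1 mIt
  (fun a => norm_bellman_integrand_le rt Pt Wt Rm D mWt WtD rtRm (x, a)).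
rewrite !bellmanE -RintegralB //.
apply: normr_Rintegral_le_prob pi1 (measurable_funB mIt mI) _ => a.
have P1 := prob_kernel (s := P) (x, a).
have intWt := integrable_bounded_prob P1 mWt WtD.
have intW := integrable_bounded_prob P1 mW WD.
set IPWt := Rintegral (P (x, a)) setT Wt.
rewrite /bellman_integrand /= (_ : forall u v w z : R, u + g * v - (w + g * z) =
  (u - w) + g * ((v - IPWt) + (IPWt - z))); last by move=> *; ring.
apply: le_trans (ler_normD _ _) _; apply: lerD => //.
rewrite normrM (ger0_norm g_ge0); apply: ler_wpM2l => //.
apply: le_trans (ler_normD _ _) _; apply: lerD.
  exact: Rintegral_dist_le_mul_dTV (prob_kernel (x, a)) P1 mWt WtD (PeP x a).
rewrite /IPWt -RintegralB //.
exact: normr_Rintegral_le_prob P1 (measurable_funB mWt mW) WE.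
Qed.

End bellman.

Lemma norm_bellman2_fixpoint_le {R : realType} {dS dU dA1 dA2 : measure_display}
    {S : measurableType dS} {U : measurableType dU}
    {A1 : measurableType dA1} {A2 : measurableType dA2}
    (* [{pi] is a token of generic_quotient, hence the spaces *)
    { pi1 : R.-pker S ~> A1 } { pi2 : R.-pker U ~> A2 }
    {r1 : S -> A1 -> R} {r2 : U -> A2 -> R}
    {P1 : R.-pker (S * A1)%type ~> U} {P2 : R.-pker (U * A2)%type ~> S}
    {g Rmax : R} {F : S -> R} :
  0 <= g -> g < 1 ->
  measurable_fun setT (fun xa : S * A1 => r1 xa.1 xa.2) ->
  measurable_fun setT (fun xa : U * A2 => r2 xa.1 xa.2) ->
  (forall x a, `|r1 x a| <= Rmax) -> (forall x a, `|r2 x a| <= Rmax) ->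
  bounded_meas F -> (forall x, F x = bellman pi1 r1 P1 g (bellman pi2 r2 P2 g F) x) ->
  forall x, `|F x| <= Rmax / (1 - g).
Proof.
move=> g_ge0 g_lt1 mr1 mr2 r1R r2R [mF [M FM]] Ffix.
have g2_lt1 : g ^+ 2 < 1 by rewrite expr_lt1.
apply/sup_norm_leP.
have -> : Rmax / (1 - g) = (Rmax + g * Rmax) / (1 - g ^+ 2).
  by field; rewrite !subr_eq0 ![1 == _]eq_sym !lt_eqF.
apply: sup_norm_le_of_self_improving_bound; [exact: exprn_ge0 | by [] | by exists M |].
move=> D FD x; rewrite Ffix.
have -> : Rmax + g * Rmax + g ^+ 2 * D = Rmax + g * (Rmax + g * D) by ring.
apply: (norm_bellman_le _ _ g_ge0 _ _ _ _ _ mr1) r1R x.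
  exact: measurable_bellman mr2 mF FD r2R.
exact: norm_bellman_le mr2 mF FD r2R.
Qed.

Theorem lemma16 (R : realType)
  (dS dU dA1 dA2 : measure_display)
  (S : measurableType dS) (U : measurableType dU)
  (A1 : measurableType dA1) (A2 : measurableType dA2)
  (g : R) (hg0 : 0 < g) (hg1 : g < 1)
  (pi1 : R.-pker S ~> A1) (pi2 : R.-pker U ~> A2)
  (r1 rt1 : S -> A1 -> R) (r2 rt2 : U -> A2 -> R)
  (P1 Pt1 : R.-pker (S * A1)%type ~> U) (P2 Pt2 : R.-pker (U * A2)%type ~> S)
  (Rmax epsr1 epsr2 epsP1 epsP2 : R)
  (mr1 : measurable_fun setT (fun xa : S * A1 => r1 xa.1 xa.2))
  (mrt1 : measurable_fun setT (fun xa : S * A1 => rt1 xa.1 xa.2))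
  (mr2 : measurable_fun setT (fun xa : U * A2 => r2 xa.1 xa.2))
  (mrt2 : measurable_fun setT (fun xa : U * A2 => rt2 xa.1 xa.2))
  (br1 : forall x a, `|r1 x a| <= Rmax) (brt1 : forall x a, `|rt1 x a| <= Rmax)
  (br2 : forall x a, `|r2 x a| <= Rmax) (brt2 : forall x a, `|rt2 x a| <= Rmax)
  (her1 : forall x a, `|rt1 x a - r1 x a| <= epsr1)
  (her2 : forall x a, `|rt2 x a - r2 x a| <= epsr2)
  (heP1 : forall x a, (dTV (Pt1 (x, a)) (P1 (x, a)) <= epsP1%:E)%E)
  (heP2 : forall x a, (dTV (Pt2 (x, a)) (P2 (x, a)) <= epsP2%:E)%E)
  (V Vt : S -> R)
  (hV : bounded_meas V)
  (hVfix : forall x, V x = bellman pi1 r1 P1 g (bellman pi2 r2 P2 g V) x)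
  (hVt : bounded_meas Vt)
  (hVtfix : forall x, Vt x = bellman pi1 rt1 Pt1 g (bellman pi2 rt2 Pt2 g Vt) x) :
  let Vmax := Rmax / (1 - g) in
  let eps1 := epsr1 + g * Vmax * epsP1 in
  let eps2 := epsr2 + g * Vmax * epsP2 in
  (sup_norm (fun x => (Vt x - V x)%R) <= ((eps1 + g * eps2) / (1 - g ^+ 2))%:E)%E.
Proof.
cbv zeta; set Vmax := Rmax / (1 - g).
have g_ge0 := ltW hg0.
have g2_lt1 : g ^+ 2 < 1 by rewrite expr_lt1.
have Vmax_fix : Rmax + g * Vmax = Vmax.
  by rewrite /Vmax; field; rewrite subr_eq0 eq_sym lt_eqF.
have VVmax := norm_bellman2_fixpoint_le g_ge0 hg1 mr1 mr2 br1 br2 hV hVfix.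
have VtVmax := norm_bellman2_fixpoint_le g_ge0 hg1 mrt1 mrt2 brt1 brt2 hVt hVtfix.
have [mV [M VM]] := hV; have [mVt [Mt VtMt]] := hVt.
apply: sup_norm_le_of_self_improving_bound (exprn_ge0 2 g_ge0) g2_lt1 _ _.
  by exists (Mt + M) => x; apply: le_trans (ler_normB _ _) (lerD _ _).
move=> D VD x; rewrite hVtfix hVfix.
have -> : epsr1 + g * Vmax * epsP1 + g * (epsr2 + g * Vmax * epsP2) + g ^+ 2 * D =
    epsr1 + g * (Vmax * epsP1 + (epsr2 + g * (Vmax * epsP2 + D))) by ring.
apply: bellman_perturbation_le mr1 mrt1 br1 brt1 _ _ _ _ her1 heP1 _ x => //.
- exact: measurable_bellman mr2 mV VVmax br2.
- by move=> u; rewrite -Vmax_fix; exact: norm_bellman_le mr2 mV VVmax br2 u.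
- exact: measurable_bellman mrt2 mVt VtVmax brt2.
- by move=> u; rewrite -Vmax_fix; exact: norm_bellman_le mrt2 mVt VtVmax brt2 u.
- exact: bellman_perturbation_le mr2 mrt2 br2 brt2 mV VVmax mVt VtVmax her2 heP2 VD.
Qed.
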